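(* Let $G$ be a finite group, $\mathsf K$ a simplicial $G$-complex and $\mathsf K'$ a $G$-subcomplex of $\mathsf K$. Then $\mathsf K$ $G$-collapses onto $\mathsf K'$ if and only if there is an acyclic partial $G$-matching on $\mathcal F(\mathsf K)$ whose set of critical elements is exactly $\mathcal F(\mathsf K')$.
   Context: A simplicial $G$-complex is a simplicial complex with a right action of $G$ by simplicial automorphisms; a $G$-subcomplex is a $G$-invariant subcomplex. $\mathcal F(\mathsf K)$ is the poset of nonempty simplices of $\mathsf K$ ordered by inclusion; $x\succ y$ ($x$ covers $y$) means $y<x$ with nothing strictly between. A facet is a maximal simplex; a simplex $\sigma$ is free if it is a proper face of exactly one facet $\varphi_\sigma$. A collection of free simplices is independently free if no two distinct members have a common coface. For a free $\sigma$ with $\dim\varphi_\sigma=\dim\sigma+1$ and $\sigma G$ independently free, an elementary $G$-collapse replaces $\mathsf K$ by the subcomplex of simplices having no $\sigma g$ ($g\in G$) as a face. $\mathsf K$ $G$-collapses onto $\mathsf K'$ if there is a finite sequence of elementary $G$-collapses leading from $\mathsf K$ to $\mathsf K'$. A partial $G$-matching on $\mathcal F(\mathsf K)$ is a pair $(\Sigma,\mu)$ of a $G$-invariant subset $\Sigma\subseteq\mathcal F(\mathsf K)$ and a $G$-equivariant injection $\mu:\Sigma\to\mathcal F(\mathsf K)\setminus\Sigma$ with $\mu(x)\succ x$ for all $x\in\Sigma$. Its critical elements are those of $\mathcal F(\mathsf K)\setminus(\Sigma\cup\mu(\Sigma))$. It is acyclic if there is no sequence of distinct $x_0,\dots,x_t\in\Sigma$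 ($t\ge1$) with $\mu(x_0)\succ x_1,\ \mu(x_1)\succ x_2,\dots,\mu(x_{t-1})\succ x_t$ and $\mu(x_t)\succ x_0$. *)

From mathcomp Require Import all_boot all_fingroup.
Set Implicit Arguments. Unset Strict Implicit. Unset Printing Implicit Defensive.

Section SimplicialG.
Variables (gT : finGroupType) (V : finType) (to : {action gT &-> V}).

Definition sact (s : {set V}) (g : gT) : {set V} := [set to x g | x in s].

(* A finite abstract simplicial complex on V, represented by its set of
   NONEMPTY simplices, i.e. K itself is the face poset F(K). *)
Definition is_complex (K : {set {set V}}) : Prop :=
  set0 \notin K /\
  forall s t : {set V}, s \in K -> t \subset s -> t != set0 -> t \in K.

Definition G_invariant (S : {set {set V}}) : Prop :=
  forall (s : {set V}) (g : gT), s \in S -> sact s g \in S.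

Definition is_Gcomplex (K : {set {set V}}) : Prop :=
  is_complex K /\ G_invariant K.

Definition is_Gsubcomplex (K' K : {set {set V}}) : Prop :=
  is_Gcomplex K' /\ K' \subset K.

Definition covers (K : {set {set V}}) (x y : {set V}) : bool :=
  [&& x \in K, y \in K, y \proper x &
      ~~ [exists z in K, (y \proper z) && (z \proper x)]].

Definition facet (K : {set {set V}}) (s : {set V}) : bool :=
  (s \in K) && ~~ [exists t in K, s \proper t].

Definition free (K : {set {set V}}) (s : {set V}) : bool :=
  (s \in K) && (#|[set f in K | facet K f && (s \proper f)]| == 1).

Definition indep_free (K : {set {set V}}) (S : {set {set V}}) : Prop :=
  (forall s, s \in S -> free K s) /\
  (forall s t, s \in S -> t \in S -> s != t ->
     ~ exists c, [/\ c \in K, s \subset c & t \subset c]).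

Definition orbit_s (s : {set V}) : {set {set V}} := [set sact s g | g : gT].

Definition elem_Gcollapse (K K' : {set {set V}}) : Prop :=
  exists sigma : {set V},
    [/\ free K sigma,
        (exists phi, [/\ facet K phi, sigma \proper phi & #|phi| = #|sigma|.+1]),
        indep_free K (orbit_s sigma) &
        K' = [set t in K | [forall g : gT, ~~ (sact sigma g \subset t)]]].

Inductive Gcollapses : {set {set V}} -> {set {set V}} -> Prop :=
| Gcollapses_refl K : Gcollapses K K
| Gcollapses_step K K1 K' : elem_Gcollapse K K1 -> Gcollapses K1 K' ->
    Gcollapses K K'.

Definition partial_Gmatching (K : {set {set V}}) (Sigma : {set {set V}})
    (mu : {set V} -> {set V}) : Prop :=
  [/\ Sigma \subset K /\ G_invariant Sigma,
      (forall s g, s \in Sigma -> mu (sact s g) = sact (mu s) g),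
      {in Sigma &, injective mu},
      (forall s, s \in Sigma -> (mu s \in K) && (mu s \notin Sigma)) &
      (forall s, s \in Sigma -> covers K (mu s) s)].

Definition critical (K Sigma : {set {set V}}) (mu : {set V} -> {set V})
  : {set {set V}} := [set x in K | (x \notin Sigma) && (x \notin mu @: Sigma)].

Definition acyclic_matching (K Sigma : {set {set V}})
    (mu : {set V} -> {set V}) : Prop :=
  forall s : seq {set V},
    1 < size s -> uniq s -> all (fun x => x \in Sigma) s ->
    ~~ path.cycle (fun x y => covers K (mu x) y) s.

End SimplicialG.

From mathcomp Require Import all_boot all_fingroup.
Set Implicit Arguments. Unset Strict Implicit. Unset Printing Implicit Defensive.

(* An elementary G-collapse removes the orbit of a free pair (sigma, phi).
   Matching each sigma g with phi g extends a matching of the collapsed complex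
   without creating cycles: a gradient path never enters the removed orbit from
   the rest, and leaves the orbit as soon as it moves.  Conversely, acyclicity
   yields a matched simplex x of maximal size that is a source of the gradient
   digraph; then mu x is its only proper coface, so (x, mu x) is a free pair,
   and the matching restricted off its orbit matches the collapsed complex with
   the same critical simplices. *)

Lemma uniq_cycle_of_pred (T : finType) (A : {set T}) (e : rel T) b0 :
  b0 \in A -> (forall b, b \in A -> exists2 a, a \in A & (a != b) && e a b) ->
  exists s : seq T,
    [/\ 1 < size s, uniq s, all (mem A) s & path.cycle e s].
Proof.
move=> Ab0 predA.
pose p b := odflt b [pick a in A | (a != b) && e a b].
have pA b : b \in A -> [/\ p b \in A, p b != b & e (p b) b].
  move=> Ab; rewrite /p; case: pickP => [a /andP[-> /andP[-> ->]] // | noa].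
  by case: (predA b Ab) => a Aa ha; move: (noa a); rewrite /= Aa ha.
have iterA m z : z \in A -> iter m p z \in A.
  by move=> Az; elim: m => //= m IH; case: (pA _ IH).
have trajA m z : z \in A -> all (mem A) (traject p z m).
  by elim: m z => //= m IH z Az; rewrite Az IH //; case: (pA _ Az).
set n := fingraph.order p b0.
have /trajectP [i lt_in iter_n] := looping_order p b0; rewrite -/n in lt_in iter_n.
set k := n - i; set y := iter i p b0.
have n_ik : n = i + k by rewrite /k subnKC // ltnW.
have Ay : y \in A by apply: iterA.
have yk : iter k p y = y by rewrite /y -iterD addnC -n_ik.
have : uniq (traject p b0 n) by apply: orbit_uniq.
rewrite n_ik trajectD cat_uniq => /and3P [_ _ uniq_y].
have lt1k : 1 < k.
  rewrite /k; case k_def : (n - i) => [|[|k']] //.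
    by move: lt_in; rewrite -subn_gt0 k_def.
  by move: yk; rewrite /k k_def /= => py; case: (pA _ Ay) => _; rewrite py eqxx.
have fcycle_y : fcycle p (traject p y k).
  move: (k) (ltnW lt1k) yk => [|k'] // _ yk; rewrite trajectS /=.
  have -> : rcons (traject p (p y) k') y = traject p (p y) k'.+1.
    by rewrite trajectSr -iterSr yk.
  exact: fpath_traject.
exists (rev (traject p y k)); split.
- by rewrite size_rev size_traject.
- by rewrite rev_uniq.
- by rewrite all_rev trajA.
rewrite rev_cycle; apply: (sub_in_cycle (P := mem A)) (trajA _ _ Ay) fcycle_y.
by move=> a b Aa _ /eqP <-; case: (pA _ Aa).
Qed.

Lemma uniq_cycle_all (T : eqType) (e : rel T) (P : pred T) (s : seq T) :
  1 < size s -> uniq s -> path.cycle e s ->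
  (forall x y, x \in s -> y \in s -> x != y -> e x y -> P y) -> all P s.
Proof.
move=> s_gt1 uniq_s cycle_s targetP; apply/allP => y ys.
have [i t rot_s] := rot_to ys.
have mem_s z : (z \in y :: t) = (z \in s) by rewrite -rot_s mem_rot.
move: uniq_s cycle_s s_gt1; rewrite -(rot_uniq i) -(rot_cycle i) -(size_rot i) rot_s.
case/lastP: t {rot_s} mem_s => [|t z] mem_s //=.
rewrite rcons_path last_rcons mem_rcons inE negb_or => /andP[/andP[yz _] _].
case/andP=> _ ezy _; apply: (targetP z); rewrite -?mem_s ?mem_head //.
- by rewrite inE mem_rcons mem_head orbT.
- by rewrite eq_sym.
Qed.

Section SimplicialGComplexes.
Variables (gT : finGroupType) (V : finType) (to : {action gT &-> V}).
Local Open Scope group_scope.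
Implicit Types (K Sigma : {set {set V}}) (s t c : {set V}) (g h : gT).

Lemma sactM s g h : sact to (sact to s g) h = sact to s (g * h).
Proof. by rewrite /sact -imset_comp; apply: eq_imset => x /=; rewrite actM. Qed.

Lemma sact1 s : sact to s 1 = s.
Proof. by rewrite /sact (eq_imset _ (act1 to)) imset_id. Qed.

Lemma sactK g : cancel (sact to ^~ g) (sact to ^~ g^-1).
Proof. by move=> s; rewrite sactM mulgV sact1. Qed.

Lemma sactKV g : cancel (sact to ^~ g^-1) (sact to ^~ g).
Proof. by move=> s; rewrite sactM mulVg sact1. Qed.

Lemma card_sact s g : #|sact to s g| = #|s|.
Proof. exact/card_imset/act_inj. Qed.

Lemma sactS s t g : s \subset t -> sact to s g \subset sact to t g.
Proof. exact: imsetS. Qed.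

Lemma sactSE s t g : (sact to s g \subset sact to t g) = (s \subset t).
Proof.
by apply/idP/idP => [/(sactS g^-1)|/sactS //]; rewrite !sactK.
Qed.

Lemma sact_properE s t g : (sact to s g \proper sact to t g) = (s \proper t).
Proof. by rewrite !properEcard sactSE !card_sact. Qed.

Lemma mem_orbit_s s g : sact to s g \in orbit_s to s.
Proof. by apply/imsetP; exists g. Qed.

Lemma orbit_s_refl s : s \in orbit_s to s.
Proof. by rewrite -{1}(sact1 s) mem_orbit_s. Qed.

Lemma orbit_sact s t g : (sact to t g \in orbit_s to s) = (t \in orbit_s to s).
Proof.
apply/imsetP/imsetP => [[h _ tg]|[h _ ->]]; last by exists (h * g); rewrite ?sactM.
by exists (h * g^-1); rewrite // -sactM -tg sactK.
Qed.

Lemma mem_sact_invariant K s g : G_invariant to K -> (sact to s g \in K) = (s \in K).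
Proof. by move=> iK; apply/idP/idP => [/(iK _ g^-1)|/iK //]; rewrite sactK. Qed.

Lemma complex_neq0 K s : is_complex K -> s \in K -> s != set0.
Proof. by case=> K0 _ sK; apply: contraNneq K0 => <-. Qed.

Lemma coversE K x y : is_complex K ->
  covers K y x = [&& y \in K, x \in K, x \subset y & #|y| == #|x|.+1].
Proof.
move=> [K0 closedK]; rewrite /covers; case yK: (y \in K); case xK: (x \in K) => //=.
apply/idP/idP => [/andP[xy /existsPn nomid] | /andP[xy /eqP card_y]].
  rewrite (proper_sub xy) eqn_leq (proper_card xy) andbT leqNgt; apply/negP => lt_xy.
  have [_ [v vy vx]] := properP xy.
  have vxK : v |: x \in K.
    apply: (closedK y) => //; first by rewrite subUset sub1set vy (proper_sub xy).
    by apply/set0Pn; exists v; rewrite setU11.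
  have card_vx : #|v |: x| = #|x|.+1 by rewrite cardsU1 vx.
  move: (nomid (v |: x)); rewrite vxK !properEcard card_vx lt_xy ltnSn subsetUr.
  by rewrite subUset sub1set vy (proper_sub xy).
rewrite properEcard xy card_y ltnSn /=; apply/existsPn => z.
rewrite !properEcard card_y; apply/negP => /and3P[_ /andP[_ lt_xz] /andP[_ lt_zy]].
by have := leq_trans lt_xz lt_zy; rewrite ltnn.
Qed.

Lemma covers_sact K x y g : G_invariant to K -> is_complex K ->
  covers K (sact to y g) (sact to x g) = covers K y x.
Proof.
by move=> iK cK; rewrite !coversE // !mem_sact_invariant // sactSE !card_sact.
Qed.

Lemma covers_subcomplex K1 K x y : is_complex K1 -> is_complex K -> K1 \subset K ->
  covers K1 y x = [&& y \in K1, x \in K1 & covers K y x].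
Proof.
move=> cK1 cK sK1; rewrite !coversE //.
by case yK1: (y \in K1); case xK1: (x \in K1); rewrite //= !(subsetP sK1).
Qed.

Lemma facet_above K c : c \in K -> exists2 f, facet K f & c \subset f.
Proof.
move=> cK; have cPc : (c \in K) && (c \subset c) by rewrite cK subxx.
case: (@arg_maxnP _ c (fun t => (t \in K) && (c \subset t)) (fun t => #|t|) cPc) => f /andP[fK cf] max_f.
exists f => //; rewrite /facet fK; apply/existsPn => t; apply/negP => /andP[tK ft].
have := max_f t; rewrite tK (subset_trans cf (proper_sub ft)) => /(_ isT).
by apply/negP; rewrite -ltnNge proper_card.
Qed.

Lemma facet_sact K f g : G_invariant to K -> facet K f -> facet K (sact to f g).
Proof.
move=> iK /andP[fK /existsPn maxf]; rewrite /facet mem_sact_invariant // fK /=.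
apply/existsPn => t; apply: contraNN (maxf (sact to t g^-1)) => /andP[tK ft].
by rewrite mem_sact_invariant // tK -{1}(sactK g f) sact_properE.
Qed.

Lemma free_facet_unique K s f1 f2 : free K s ->
  facet K f1 -> s \proper f1 -> facet K f2 -> s \proper f2 -> f1 = f2.
Proof.
case/andP=> _ /cards1P [f Ef] f1F sf1 f2F sf2.
have inF u : facet K u -> s \proper u -> u = f.
  by move=> uF su; apply/set1P; rewrite -Ef inE uF su; case/andP: uF => ->.
by rewrite (inF f1) // (inF f2).
Qed.

Definition Gdeletion K s : {set {set V}} :=
  [set t in K | [forall g : gT, ~~ (sact to s g \subset t)]].

Lemma Gdeletion_sub K s : Gdeletion K s \subset K.
Proof. by apply/subsetP => t; rewrite inE => /andP[]. Qed.

Lemma sact_notin_Gdeletion K s t g : sact to s g \subset t -> t \notin Gdeletion K s.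
Proof. by move=> st; rewrite inE negb_and; apply/orP; right; apply/forallPn; exists g; rewrite negbK. Qed.

Lemma orbit_notin_Gdeletion K s y : y \in orbit_s to s -> y \notin Gdeletion K s.
Proof. by case/imsetP=> g _ ->; apply/sact_notin_Gdeletion/subxx. Qed.

Lemma Gdeletion_complex K s : is_complex K -> is_complex (Gdeletion K s).
Proof.
case=> K0 closedK; split; first by apply: contra K0; apply: (subsetP (Gdeletion_sub _ _)).
move=> t u; rewrite !inE => /andP[tK /forallP avoid_t] ut u0.
rewrite (closedK t) //; apply/forallP => g.
by apply: contra (avoid_t g) => /subset_trans; apply.
Qed.

Lemma Gdeletion_invariant K s : G_invariant to K -> G_invariant to (Gdeletion K s).
Proof.
move=> iK t g; rewrite !inE => /andP[tK /forallP avoid_t]; rewrite iK //=.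
apply/forallP => h; apply: contra (avoid_t (h * g^-1)) => sub_hg.
by rewrite -sactM -(sactK g t) sactS.
Qed.

(* The free pairs removed by an elementary G-collapse, described without facets. *)
Definition free_Gpair K sigma phi : Prop :=
  [/\ covers K phi sigma,
      forall c, c \in K -> sigma \subset c -> c = sigma \/ c = phi &
      forall g, sact to sigma g \subset phi -> sact to sigma g = sigma].

Section FreeGpair.
Variables (K : {set {set V}}) (sigma phi : {set V}).
Hypotheses (cK : is_complex K) (iK : G_invariant to K)
  (pair : free_Gpair K sigma phi).

Lemma free_Gpair_sact g : free_Gpair K (sact to sigma g) (sact to phi g).
Proof.
case: pair => cov cofaces indep; split; first by rewrite covers_sact.
  move=> c cK' sc; have cgK : sact to c g^-1 \in K by rewrite mem_sact_invariant.
  have sigma_cg : sigma \subset sact to c g^-1 by rewrite -(sactSE _ _ g) sactKV.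
  by case: (cofaces _ cgK sigma_cg) => <-; rewrite sactKV; [left|right].
move=> h; rewrite sactM => sub_gh.
have : sact to sigma (g * h * g^-1) \subset phi by rewrite -sactM -(sactK g phi) sactSE.
by move/indep => E; rewrite -{2}E sactM mulgKV.
Qed.

Lemma card_phi : #|phi| = #|sigma|.+1.
Proof. by case: pair; rewrite coversE // => /and4P[_ _ _ /eqP]. Qed.

Lemma sigma_proper_phi : sigma \proper phi.
Proof. by case: pair; rewrite coversE // properEcard card_phi ltnSn => /and4P[_ _ ->]. Qed.

Lemma sigma_in : sigma \in K.
Proof. by case: pair; rewrite coversE // => /and4P[]. Qed.

Lemma phi_in : phi \in K.
Proof. by case: pair; rewrite coversE // => /and4P[]. Qed.

Lemma cofaces c : c \in K -> sigma \subset c -> c = sigma \/ c = phi.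
Proof. by case: pair => _ + _; apply. Qed.

Lemma cofaces_sact g c : c \in K -> sact to sigma g \subset c ->
  c = sact to sigma g \/ c = sact to phi g.
Proof. by case: (free_Gpair_sact g) => _ + _; apply. Qed.

Lemma sact_sigma_indep g h : sact to sigma g \subset sact to phi h ->
  sact to sigma g = sact to sigma h.
Proof.
case: (free_Gpair_sact h) => _ _ /(_ (h^-1 * g)).
by rewrite sactM mulgA mulgV mul1g => /[apply].
Qed.

Lemma sact_phi_eq g h : sact to sigma g = sact to sigma h -> sact to phi g = sact to phi h.
Proof.
move=> Egh; have phi_hK : sact to phi h \in K by rewrite mem_sact_invariant // phi_in.
have : sact to sigma g \subset sact to phi h by rewrite Egh sactS // proper_sub // sigma_proper_phi.
case/(cofaces_sact phi_hK) => [|->//] /(congr1 (fun t => #|t|)).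
by rewrite !card_sact card_phi => /esym/n_Sn.
Qed.

Lemma phi_notin_Gdeletion g : sact to phi g \notin Gdeletion K sigma.
Proof. by apply/sact_notin_Gdeletion/sactS/proper_sub/sigma_proper_phi. Qed.

Lemma notin_GdeletionP y : y \in K -> y \notin Gdeletion K sigma ->
  exists g, y = sact to sigma g \/ y = sact to phi g.
Proof.
move=> yK; rewrite inE yK => /forallPn [g]; rewrite negbK => sy.
by exists g; apply: cofaces_sact.
Qed.

Lemma facet_phi : facet K phi.
Proof.
rewrite /facet phi_in; apply/existsPn => t; apply/negP => /andP[tK phi_t].
have sigma_t := proper_sub (proper_trans sigma_proper_phi phi_t).
case: (cofaces tK sigma_t) => Et; move: phi_t.
  by rewrite Et => /proper_trans/(_ sigma_proper_phi); rewrite properxx.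
by rewrite Et properxx.
Qed.

Lemma free_sact_sigma g : free K (sact to sigma g).
Proof.
rewrite /free mem_sact_invariant // sigma_in; apply/cards1P; exists (sact to phi g).
apply/setP => f; rewrite !inE; apply/idP/eqP => [/and3P[fK _ sf]|->].
  by case: (cofaces_sact fK (proper_sub sf)) => [Ef|//]; move: sf; rewrite Ef properxx.
rewrite mem_sact_invariant // phi_in facet_sact ?facet_phi //.
by rewrite sact_properE sigma_proper_phi.
Qed.

Lemma free_Gpair_elem_Gcollapse : elem_Gcollapse to K (Gdeletion K sigma).
Proof.
exists sigma; split=> //; [by rewrite -{1}(sact1 sigma) free_sact_sigma | exists phi; split | split].
- exact: facet_phi.
- exact: sigma_proper_phi.
- exact: card_phi.
- by move=> _ /imsetP[g _ ->]; apply: free_sact_sigma.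
move=> _ _ /imsetP[g _ ->] /imsetP[h _ ->] neq_gh [c [cK' gc hc]].
case: (cofaces_sact cK' gc) => Ec; move: hc; rewrite Ec => hc.
  by move: neq_gh; rewrite eq_sym eqEcard hc !card_sact leqnn.
by rewrite (sact_sigma_indep hc) eqxx in neq_gh.
Qed.

End FreeGpair.

Lemma elem_Gcollapse_free_Gpair K K1 : is_complex K -> G_invariant to K ->
  elem_Gcollapse to K K1 ->
  exists sigma phi, free_Gpair K sigma phi /\ K1 = Gdeletion K sigma.
Proof.
move=> cK iK [sigma [free_s [phi [facet_phi s_phi card_phi]] [free_orb indep] ->]].
exists sigma, phi; split=> //; have sK : sigma \in K by case/andP: free_s.
have phiK : phi \in K by case/andP: facet_phi.
split.
- by rewrite coversE // sK phiK (proper_sub s_phi) card_phi eqxx.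
- move=> c cK' sc; have [->|neq_cs] := eqVneq c sigma; [by left | right].
  have sc' : sigma \proper c by rewrite properEneq eq_sym neq_cs.
  have [f facet_f cf] := facet_above cK'.
  have Ef := free_facet_unique free_s facet_phi s_phi facet_f (proper_sub_trans sc' cf).
  apply/eqP; rewrite eqEcard {1}Ef cf card_phi; exact: proper_card.
move=> g sg_phi; apply/eqP/negPn/negP => neq_g.
apply: (indep _ _ (mem_orbit_s sigma g) (orbit_s_refl sigma) neq_g); exists phi.
by split=> //; apply: proper_sub.
Qed.

Lemma acyclic_matching_sub K1 K Sigma1 Sigma mu :
  is_complex K1 -> is_complex K -> K1 \subset K -> Sigma1 \subset Sigma ->
  acyclic_matching K Sigma mu -> acyclic_matching K1 Sigma1 mu.
Proof.
move=> cK1 cK sK1 sS1 acyc s s_gt1 uniq_s all_s.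
apply: contra (acyc s s_gt1 uniq_s (sub_all (subsetP sS1) all_s)).
by apply: sub_cycle => a b; rewrite (covers_subcomplex _ _ cK1 cK sK1) => /and3P[].
Qed.

Section OrbitMatching.
Variables (K : {set {set V}}) (sigma phi : {set V}) (mu : {set V} -> {set V}).
Hypotheses (cK : is_complex K) (iK : G_invariant to K)
  (pair : free_Gpair K sigma phi)
  (mu_orbit : forall g, mu (sact to sigma g) = sact to phi g).

Local Notation K1 := (Gdeletion K sigma).
Local Notation O := (orbit_s to sigma).

Let cK1 : is_complex K1 := Gdeletion_complex sigma cK.
Let sK1 : K1 \subset K := Gdeletion_sub K sigma.
Let phi_out g : sact to phi g \notin K1 := phi_notin_Gdeletion cK pair g.
Let notin_K1P := notin_GdeletionP cK iK pair.
Let indep := sact_sigma_indep cK iK pair.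

Lemma partial_Gmatching_orbit_union Sigma1 :
  partial_Gmatching to K1 Sigma1 mu -> partial_Gmatching to K (Sigma1 :|: O) mu.
Proof.
case=> [[S1K1 S1inv] Meq Minj MK1 Mcov].
have inK1 y : y \in Sigma1 -> y \in K1 := subsetP S1K1 y.
have muK1 y : y \in Sigma1 -> mu y \in K1 by move/MK1/andP=> [].
have sigma_gK g : sact to sigma g \in K by rewrite mem_sact_invariant // (sigma_in cK pair).
split.
- split.
    apply/subsetP => y /setUP[/inK1/(subsetP sK1) //|/imsetP[g _ ->]].
    exact: sigma_gK.
  by move=> y g /setUP[/S1inv yg|yO]; rewrite in_setU ?yg ?orbit_sact ?yO ?orbT.
- move=> y g /setUP[/Meq //|/imsetP[h _ ->]].
  by rewrite sactM !mu_orbit sactM.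
- move=> y z /setUP[yS|/imsetP[g _ ->]] /setUP[zS|/imsetP[h _ ->]].
  + exact: Minj.
  + by rewrite mu_orbit => E; move: (muK1 y yS); rewrite E (negbTE (phi_out _)).
  + by rewrite mu_orbit => E; move: (muK1 z zS); rewrite -E (negbTE (phi_out _)).
  + rewrite !mu_orbit => E; apply: indep.
    by rewrite -E sactS // proper_sub // (sigma_proper_phi cK pair).
- move=> y /setUP[yS|/imsetP[g _ ->]].
    have /andP[mK1 mnS] := MK1 y yS.
    rewrite (subsetP sK1 _ mK1) in_setU negb_or mnS /=.
    by apply: contraL mK1; apply: orbit_notin_Gdeletion.
  rewrite mu_orbit mem_sact_invariant // (phi_in cK pair) in_setU negb_or /=.
  apply/andP; split; first exact: contra (inK1 _) (phi_out g).
  apply/imsetP => -[h _ /(congr1 (fun t => #|t|))].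
  by rewrite !card_sact (card_phi cK pair) => /esym/n_Sn.
move=> y /setUP[yS|/imsetP[g _ ->]].
  by have := Mcov y yS; rewrite (covers_subcomplex _ _ cK1 cK sK1) => /and3P[].
by rewrite mu_orbit covers_sact //; case: pair.
Qed.

Lemma partial_Gmatching_orbit_restrict Sigma : sigma \in Sigma ->
  partial_Gmatching to K Sigma mu -> partial_Gmatching to K1 (Sigma :\: O) mu.
Proof.
move=> sigmaS [[SK Sinv] Meq Minj MK Mcov].
have OS g : sact to sigma g \in Sigma := Sinv _ g sigmaS.
have mu_notS y : y \in Sigma -> mu y \notin Sigma by move/MK/andP=> [].
have inK1 y : y \in Sigma :\: O -> (y \in K1) && (mu y \in K1).
  case/setDP=> yS yO; have /andP[muK _] := MK y yS.
  apply/andP; split; apply/negPn/negP.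
    case/(notin_K1P (subsetP SK y yS)) => g [E|E].
      by move: yO; rewrite E mem_orbit_s.
    by move: (mu_notS _ (OS g)); rewrite mu_orbit -E yS.
  case/(notin_K1P muK) => g [E|E].
    by move: (mu_notS _ yS); rewrite E OS.
  by move: yO; rewrite -mu_orbit in E; rewrite (Minj _ _ yS (OS g) E) mem_orbit_s.
split.
- split; first by apply/subsetP => y /inK1/andP[].
  by move=> y g /setDP[yS yO]; rewrite in_setD orbit_sact yO Sinv.
- by move=> y g /setDP[yS _]; apply: Meq.
- by move=> y z /setDP[yS _] /setDP[zS _]; apply: Minj.
- move=> y ySO; have /andP[_ ->] := inK1 y ySO.
  by rewrite in_setD negb_and (mu_notS _ (setDP ySO).1) orbT.
move=> y ySO; have /andP[yK1 muK1] := inK1 y ySO.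
by rewrite (covers_subcomplex _ _ cK1 cK sK1) yK1 muK1 Mcov //; case/setDP: ySO.
Qed.

Lemma critical_orbit_union Sigma1 : partial_Gmatching to K1 Sigma1 mu ->
  critical K (Sigma1 :|: O) mu = critical K1 Sigma1 mu.
Proof.
case=> [[S1K1 _] _ _ MK1 _]; apply/setP => y.
rewrite /critical in_set [in RHS]in_set in_setU negb_or -andbA.
apply/idP/idP => [/and4P[yK yS1 yO ymu]|/and3P[yK1 yS1 ymu1]].
  rewrite yS1; apply/andP; split.
    apply/negPn/negP => /(notin_K1P yK) [g [E|E]].
      by move: yO; rewrite E mem_orbit_s.
    by move: ymu; rewrite E -mu_orbit imset_f // in_setU mem_orbit_s orbT.
  by apply: contra ymu => /imsetP[a aS ->]; rewrite imset_f // in_setU aS.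
rewrite (subsetP sK1 _ yK1) yS1 /=; apply/andP; split.
  by apply: contraL yK1; apply: orbit_notin_Gdeletion.
apply/imsetP => -[a /setUP[aS|/imsetP[g _ ->]] Ey].
  by move: ymu1; rewrite Ey imset_f.
by move: yK1; rewrite Ey mu_orbit (negbTE (phi_out _)).
Qed.

Lemma acyclic_orbit_union Sigma1 : partial_Gmatching to K1 Sigma1 mu ->
  acyclic_matching K1 Sigma1 mu -> acyclic_matching K (Sigma1 :|: O) mu.
Proof.
case=> [[S1K1 _] _ _ MK1 _] acyc1 s s_gt1 uniq_s all_s; apply/negP => cycle_s.
have muK1 y : y \in Sigma1 -> mu y \in K1 by move/MK1/andP=> [].
have edge x y : x \in Sigma1 :|: O -> y \in Sigma1 :|: O -> x != y ->
    covers K (mu x) y -> y \in Sigma1.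
  move=> xS yS neq_xy; rewrite coversE // => /and4P[_ yK y_mu _].
  case/setUP: xS => [xS1|/imsetP[g _ Ex]].
    have yK1 : y \in K1 by apply: cK1.2 (muK1 x xS1) y_mu (complex_neq0 cK yK).
    by case/setUP: yS => // /(orbit_notin_Gdeletion K); rewrite yK1.
  case/setUP: yS => // /imsetP[h _ Ey]; move: y_mu neq_xy.
  by rewrite Ex Ey mu_orbit => /indep ->; rewrite eqxx.
have all_S1 : all (mem Sigma1) s.
  apply: (uniq_cycle_all s_gt1 uniq_s cycle_s) => x y xs ys.
  exact: edge (allP all_s x xs) (allP all_s y ys).
move/negP: (acyc1 s s_gt1 uniq_s all_S1); apply.
apply: (sub_in_cycle (P := mem Sigma1)) all_S1 cycle_s => a b /= aS bS.
rewrite (covers_subcomplex _ _ cK1 cK sK1) muK1 //= => ->; rewrite andbT.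
by apply: (subsetP S1K1).
Qed.

End OrbitMatching.

Lemma critical_set0 K mu : critical K set0 mu = K.
Proof. by apply/setP => y; rewrite !inE imset0 inE andbT. Qed.

Lemma empty_Gmatching K mu :
  [/\ partial_Gmatching to K set0 mu, acyclic_matching K set0 mu
    & critical K set0 mu = K].
Proof.
split; last exact: critical_set0.
- split; first by split=> [|s g]; rewrite ?sub0set ?inE.
  + by move=> s g; rewrite inE.
  + by move=> s t; rewrite inE.
  + by move=> s; rewrite inE.
  + by move=> s; rewrite inE.
- by case=> [|a s] // _ _ /=; rewrite inE.
Qed.

Lemma Gmatching_eq_in K K' Sigma mu mu' : {in Sigma, mu =1 mu'} ->
  [/\ partial_Gmatching to K Sigma mu, acyclic_matching K Sigma mu
    & critical K Sigma mu = K'] ->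
  [/\ partial_Gmatching to K Sigma mu', acyclic_matching K Sigma mu'
    & critical K Sigma mu' = K'].
Proof.
move=> E [[[SK SI] Meq Minj MK Mcov] acyc crit]; split.
- split=> //.
  + by move=> s g sS; rewrite -!E ?SI //; apply: Meq.
  + by move=> s t sS tS; rewrite -!E //; apply: Minj.
  + by move=> s sS; rewrite -E //; apply: MK.
  + by move=> s sS; rewrite -E //; apply: Mcov.
- move=> s s_gt1 uniq_s all_s; apply: contra (acyc s s_gt1 uniq_s all_s).
  by apply: (sub_in_cycle (P := mem Sigma)) all_s => a b aS _; rewrite /= E.
by rewrite -crit /critical (eq_in_imset E).
Qed.

Definition orbit_pairing sigma phi (mu : {set V} -> {set V}) y : {set V} :=
  if [pick g | sact to sigma g == y] is Some g then sact to phi g else mu y.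

Lemma orbit_pairing_orbit K sigma phi mu g : is_complex K -> G_invariant to K ->
  free_Gpair K sigma phi -> orbit_pairing sigma phi mu (sact to sigma g) = sact to phi g.
Proof.
move=> cK iK pair; rewrite /orbit_pairing; case: pickP => [h /eqP|/(_ g)].
  exact: (sact_phi_eq cK iK pair).
by rewrite eqxx.
Qed.

Lemma orbit_pairing_out sigma phi mu y : y \notin orbit_s to sigma ->
  orbit_pairing sigma phi mu y = mu y.
Proof.
by move=> yO; rewrite /orbit_pairing; case: pickP => // g /eqP Eg; rewrite -Eg mem_orbit_s in yO.
Qed.

Definition matching_source Sigma (mu : {set V} -> {set V}) (x : {set V}) :=
  [forall a in Sigma, (x \subset mu a) ==> (a == x)].

Section Sources.
Variables (K K' Sigma : {set {set V}}) (mu : {set V} -> {set V}).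
Hypotheses (cK : is_complex K) (cK' : is_complex K')
  (matching : partial_Gmatching to K Sigma mu)
  (acyc : acyclic_matching K Sigma mu) (crit : critical K Sigma mu = K').

(* If no simplex of maximal size in Sigma were a source, every one of them
   would have a predecessor of the same size, giving a gradient cycle. *)
Lemma exists_max_source s0 : s0 \in Sigma ->
  exists x, [/\ x \in Sigma, forall a, a \in Sigma -> #|a| <= #|x|
              & matching_source Sigma mu x].
Proof.
case: matching => [[SK _] _ _ MK Mcov] s0S.
case: (@arg_maxnP _ s0 (mem Sigma) (fun t => #|t|) s0S) => x1 x1S max_x1.
pose A := [set x in Sigma | #|x| == #|x1|].
have [/exists_inP[x]|/exists_inPn nosrc] := boolP [exists x in A, matching_source Sigma mu x].
  by rewrite inE => /andP[xS /eqP cx] srcx; exists x; split=> // a /max_x1; rewrite cx.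
have x1A : x1 \in A by rewrite inE eqxx andbT; exact: x1S.
have [|s [s_gt1 uniq_s all_s cycle_s]] :=
    uniq_cycle_of_pred (e := fun a b => covers K (mu a) b) x1A.
  move=> b; rewrite inE => /andP[bS /eqP cb].
  have bA : b \in A by rewrite inE bS cb eqxx.
  have /forall_inPn [a aS] := nosrc b bA.
  have /andP[muK muS] := MK a aS.
  have := Mcov a aS; rewrite coversE // => /and4P[_ aK a_mu /eqP card_mu].
  rewrite negb_imply => /andP[b_mu neq_ab].
  have b_mu' : b \proper mu a by rewrite properEneq b_mu andbT; apply: contraNneq muS => <-.
  have card_a : #|a| = #|x1|.
    have le_a : #|a| <= #|x1| := max_x1 a aS.
    by apply/eqP; rewrite eqn_leq le_a -cb -ltnS -card_mu proper_card.
  exists a; first by rewrite inE aS card_a eqxx.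
  by rewrite neq_ab coversE // muK (subsetP SK b bS) b_mu card_mu card_a cb /=.
have sAS : A \subset Sigma by apply/subsetP => y; rewrite inE => /andP[].
have all_S : all (mem Sigma) s := sub_all (subsetP sAS) all_s.
by move/negP: (acyc s_gt1 uniq_s all_S).
Qed.

Lemma matching_source_sact x g : G_invariant to Sigma ->
  matching_source Sigma mu x -> matching_source Sigma mu (sact to x g).
Proof.
case: matching => _ Meq _ _ _ iS /forall_inP src_x.
apply/forall_inP => a aS; apply/implyP => xg_mua.
have agS : sact to a g^-1 \in Sigma by apply: iS.
have : x \subset mu (sact to a g^-1) by rewrite Meq // -(sactSE _ _ g) sactKV.
by move/implyP: (src_x _ agS) => /[apply] /eqP <-; rewrite sactKV.
Qed.

(* A coface of [x] cannot lie in [K'], which is closed under faces and avoids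
   [Sigma]; so it is matched, and maximality and the source property pin it down. *)
Lemma max_source_cofaces x c : x \in Sigma ->
  (forall a, a \in Sigma -> #|a| <= #|x|) -> matching_source Sigma mu x ->
  c \in K -> x \subset c -> c = x \/ c = mu x.
Proof.
case: matching => [[SK _] _ _ _ _] xS max_x /forall_inP src_x cK_c xc.
have c_notK' : c \notin K'.
  apply/negP => /(cK'.2 c x)/(_ xc (complex_neq0 cK (subsetP SK x xS))).
  by rewrite -crit inE xS /= andbF.
move: c_notK'; rewrite -crit inE cK_c /= negb_and !negbK => /orP[cS|/imsetP[a aS Ec]].
  by left; apply/eqP; rewrite eq_sym eqEcard xc max_x.
by right; rewrite Ec in xc *; move/implyP: (src_x a aS) => /(_ xc) /eqP ->.
Qed.

Lemma max_source_free_Gpair x : G_invariant to Sigma -> x \in Sigma ->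
  (forall a, a \in Sigma -> #|a| <= #|x|) -> matching_source Sigma mu x ->
  free_Gpair K x (mu x).
Proof.
move=> iS xS max_x src_x; case: matching => _ _ _ _ Mcov.
split; [exact: Mcov | move=> c; exact: max_source_cofaces xS max_x src_x | move=> g xg_mu].
move/forall_inP: (matching_source_sact g iS src_x) => /(_ x xS) /implyP.
by move=> /(_ xg_mu) /eqP.
Qed.

End Sources.

Lemma Gcollapses_Gmatching K K' : is_complex K -> G_invariant to K ->
  Gcollapses to K K' ->
  exists Sigma mu, [/\ partial_Gmatching to K Sigma mu,
                       acyclic_matching K Sigma mu & critical K Sigma mu = K'].
Proof.
move=> cK iK collapse; elim: collapse cK iK => {K K'} [K|K K1 K' elem _ IH] cK iK.
  by exists set0, id; apply: empty_Gmatching.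
have [sigma [phi [pair EK1]]] := elem_Gcollapse_free_Gpair cK iK elem; subst K1.
have [Sigma1 [mu1 match1]] := IH (Gdeletion_complex sigma cK) (Gdeletion_invariant iK).
pose mu := orbit_pairing sigma phi mu1.
have mu_orbit g : mu (sact to sigma g) = sact to phi g := orbit_pairing_orbit mu1 g cK iK pair.
have [M1 A1 C1] : [/\ partial_Gmatching to (Gdeletion K sigma) Sigma1 mu,
    acyclic_matching (Gdeletion K sigma) Sigma1 mu & critical (Gdeletion K sigma) Sigma1 mu = K'].
  case: (match1) => [[[/subsetP S1K1 _] _ _ _ _] _ _].
  apply: Gmatching_eq_in match1 => y yS1; rewrite /mu orbit_pairing_out //.
  by apply: contraL (S1K1 y yS1); apply: orbit_notin_Gdeletion.
exists (Sigma1 :|: orbit_s to sigma), mu; split.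
- exact: (partial_Gmatching_orbit_union cK iK pair mu_orbit M1).
- exact: (acyclic_orbit_union cK iK pair mu_orbit M1 A1).
- by rewrite (critical_orbit_union cK iK pair mu_orbit).
Qed.

Lemma Gmatching_Gcollapses K K' Sigma mu :
  is_complex K -> G_invariant to K -> is_complex K' ->
  partial_Gmatching to K Sigma mu -> acyclic_matching K Sigma mu ->
  critical K Sigma mu = K' -> Gcollapses to K K'.
Proof.
move Hn : #|Sigma| => n; elim/ltn_ind: n => n IH in K Sigma mu Hn *.
move=> cK iK cK' matching acyc crit.
have [S0|[s0 s0S]] := set_0Vmem Sigma.
  by rewrite -crit S0 critical_set0; apply: Gcollapses_refl.
have [[_ iS] Meq _ _ _] := matching.
have [x [xS max_x src_x]] := exists_max_source cK matching acyc s0S.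
have pair := max_source_free_Gpair cK cK' matching crit iS xS max_x src_x.
have mu_orbit g : mu (sact to x g) = sact to (mu x) g by apply: Meq.
have OS : orbit_s to x \subset Sigma by apply/subsetP => _ /imsetP[g _ ->]; apply: iS.
apply: Gcollapses_step (free_Gpair_elem_Gcollapse cK iK pair) _.
have lt_card : #|Sigma :\: orbit_s to x| < n.
  rewrite -Hn; apply/proper_card/properP; split; first exact: subsetDl.
  by exists x => //; rewrite in_setD orbit_s_refl.
have match1 := partial_Gmatching_orbit_restrict cK iK pair mu_orbit xS matching.
apply: (IH _ lt_card _ _ mu (erefl _) (Gdeletion_complex x cK) (Gdeletion_invariant iK) cK' match1).
  exact: acyclic_matching_sub (Gdeletion_complex _ cK) cK (Gdeletion_sub _ _) (subsetDl _ _) acyc.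
rewrite -(critical_orbit_union cK iK pair mu_orbit match1) -crit; congr critical.
apply/setP => y; rewrite in_setU in_setD.
by case: (boolP (y \in orbit_s to x)) => [/(subsetP OS) ->|_]; rewrite ?orbT ?andbT ?orbF.
Qed.

End SimplicialGComplexes.

Unset Implicit Arguments.

Theorem mainTheorem4 (gT : finGroupType) (V : finType)
    (to : {action gT &-> V}) (K K' : {set {set V}}) :
  is_Gcomplex to K -> is_Gsubcomplex to K' K ->
  (Gcollapses to K K' <->
   exists (Sigma : {set {set V}}) (mu : {set V} -> {set V}),
     [/\ partial_Gmatching to K Sigma mu,
         acyclic_matching K Sigma mu &
         critical K Sigma mu = K']).
Proof.
move=> [cK iK] [[cK' _] _]; split; first exact: Gcollapses_Gmatching.
by case=> Sigma [mu [matching acyc crit]]; apply: Gmatching_Gcollapses matching acyc crit.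
Qed.
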